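(* Let $q$ be a prime power, $d\ge 1$, let $B$ be a non-degenerate bilinear form on $\mathbb{F}_q^d$, and let $\lambda\in\mathbb{F}_q^{*}$. For every nonempty subset $V\subseteq\mathbb{F}_q^d$, \[ \sum_{\mathbf{v}\in\mathbb{F}_q^d}\Big(|N^{\lambda}_V(\mathbf{v})|-\frac{|V|}{q}\Big)^2 < q^{d-1}|V|. \]
   Context: $B:\mathbb{F}_q^d\times\mathbb{F}_q^d\to\mathbb{F}_q$ is bilinear and non-degenerate. For $\mathbf{v}\in\mathbb{F}_q^d$, $N^{\lambda}(\mathbf{v})=\{\mathbf{u}\in\mathbb{F}_q^d: B(\mathbf{v},\mathbf{u})=\lambda\}$, and for $V\subseteq\mathbb{F}_q^d$, $N^{\lambda}_V(\mathbf{v})=N^{\lambda}(\mathbf{v})\cap V$. $\mathbb{F}_q^*=\mathbb{F}_q\setminus\{0\}$. *)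

From HB Require Import structures.
From mathcomp Require Import all_boot all_order all_algebra all_field.
Set Implicit Arguments. Unset Strict Implicit. Unset Printing Implicit Defensive.
Import GRing.Theory Num.Theory.
Local Open Scope ring_scope.

Definition is_bilinear_form (F : fieldType) (d : nat) (B : 'rV[F]_d -> 'rV[F]_d -> F) : Prop :=
  (forall (a : F) (u1 u2 v : 'rV[F]_d), B (a *: u1 + u2) v = a * B u1 v + B u2 v) /\
  (forall (a : F) (u v1 v2 : 'rV[F]_d), B u (a *: v1 + v2) = a * B u v1 + B u v2).

Definition is_nondegenerate (F : fieldType) (d : nat) (B : 'rV[F]_d -> 'rV[F]_d -> F) : Prop :=
  (forall v, (forall u, B v u = 0) -> v = 0) /\
  (forall u, (forall v, B v u = 0) -> u = 0).

Definition Nlam (F : finFieldType) (d : nat) (B : 'rV[F]_d -> 'rV[F]_d -> F)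
  (lam : F) (v : 'rV[F]_d) : {set 'rV[F]_d} := [set u | B v u == lam].

Definition NlamV (F : finFieldType) (d : nat) (B : 'rV[F]_d -> 'rV[F]_d -> F)
  (lam : F) (V : {set 'rV[F]_d}) (v : 'rV[F]_d) : {set 'rV[F]_d} := Nlam B lam v :&: V.

From HB Require Import structures.
From mathcomp Require Import all_boot all_order all_algebra all_field.
Import GRing.Theory Num.Theory.
Set Implicit Arguments. Unset Strict Implicit. Unset Printing Implicit Defensive.
Local Open Scope ring_scope.

(* For t in F write S(t) = sum_v (|N^t_V(v)| - |V|/q)^2.  The proof computes
   the total sum_t S(t) exactly and then splits it:
   - for fixed v the counts |N^t_V(v)|, t in F, partition V, so centring them
     at their mean |V|/q gives
       sum_t S(t) = sum_{v,t} |N^t_V(v)|^2 - |V|^2 q^(d-1);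
   - sum_{v,t} |N^t_V(v)|^2 counts triples (v,u,w) with u, w in V and
     B(v, u - w) = 0; a kernel {v | B(v,x) = 0} has q^(d-1) elements for x <> 0
     (non-degeneracy) and q^d for x = 0, whence sum_t S(t) = |V| q^(d-1) (q-1);
   - rescaling v shows S(t) = S(lam) for every t <> 0, and S(0) > 0 because
     the term v = 0 contributes (|V| - |V|/q)^2.
   Hence (q-1) S(lam) = |V| q^(d-1) (q-1) - S(0) < |V| q^(d-1) (q-1). *)

Lemma sum_indicator (T : finType) (Q P : pred T) :
  (\sum_(i | Q i) P i)%N = #|[set i | Q i && P i]|.
Proof.
rewrite -sum1dep_card [RHS]big_mkcond [LHS]big_mkcond /=.
by apply: eq_bigr => i _; case: (Q i); case: (P i).
Qed.

Lemma sum_sq_centered (R : comPzRingType) (T : finType) (x : T -> R) (c : R) :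
  \sum_t x t = c *+ #|T| ->
  \sum_t (x t - c) ^+ 2 = \sum_t x t ^+ 2 - c ^+ 2 *+ #|T|.
Proof.
move=> sum_x; under eq_bigr do rewrite sqrrB.
rewrite big_split sumrB /= sumrMnl -mulr_suml sum_x sumr_const.
by rewrite mulrnAl -expr2 mulr2n opprD addrA subrK.
Qed.

Section BilinearFacts.
Variables (F : fieldType) (d : nat) (B : 'rV[F]_d -> 'rV[F]_d -> F).
Hypothesis hB : is_bilinear_form B.

Lemma bilin0l v : B 0 v = 0.
Proof.
have := hB.1 1 0 0 v; rewrite scale1r addr0 mul1r => e.
by apply: (@addIr _ (B 0 v)); rewrite add0r -e.
Qed.

Lemma bilin0r v : B v 0 = 0.
Proof.
have := hB.2 1 v 0 0; rewrite scale1r addr0 mul1r => e.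
by apply: (@addIr _ (B v 0)); rewrite add0r -e.
Qed.

Lemma bilinZl a u v : B (a *: u) v = a * B u v.
Proof. by rewrite -[a *: u]addr0 hB.1 bilin0l addr0. Qed.

Lemma bilinDl u w v : B (u + w) v = B u v + B w v.
Proof. by rewrite -[u]scale1r hB.1 mul1r scale1r. Qed.

Lemma bilinBr v u w : B v (u - w) = B v u - B v w.
Proof. by rewrite addrC -scaleN1r hB.2 mulN1r addrC. Qed.

End BilinearFacts.

Section Kernel.
Variables (F : finFieldType) (d : nat) (B : 'rV[F]_d -> 'rV[F]_d -> F).
Hypothesis hB : is_bilinear_form B.

(* If B(v0,x) = 1, translation by t v0 maps the kernel of B(.,x) onto the
   level set B(.,x) = t, so all level sets have the same size. *)
Lemma card_level_set x v0 t : B v0 x = 1 ->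
  #|[set v | B v x == t]| = #|[set v | B v x == 0]|.
Proof.
move=> Bv0; rewrite -[RHS](card_imset _ (addIr (t *: v0))); apply: eq_card => y.
rewrite [in LHS]inE; apply/idP/imsetP => [/eqP By | [z]].
  exists (y - t *: v0); last by rewrite subrK.
  by rewrite inE bilinDl // -scaleNr bilinZl // Bv0 mulr1 By subrr.
by rewrite inE => /eqP Bz ->; rewrite bilinDl // bilinZl // Bv0 mulr1 Bz add0r.
Qed.

Hypothesis hN : is_nondegenerate B.

Lemma exists_dual_unit x : x != 0 -> exists v0, B v0 x = 1.
Proof.
move=> xnz; have [w Bw] : exists w, B w x != 0.
  apply/existsP; apply: contraR xnz => /existsPn Bx0.
  by apply/eqP/hN.2 => v; apply/eqP; rewrite -[_ == _]negbK Bx0.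
by exists ((B w x)^-1 *: w); rewrite bilinZl // mulVf.
Qed.

(* For x <> 0 the q level sets of B(.,x) are equinumerous and cover F^d. *)
Lemma card_kernel_mul x : x != 0 ->
  (#|[set v | B v x == 0%R]| * #|F| = #|F| ^ d)%N.
Proof.
move=> /exists_dual_unit [v0 Bv0].
rewrite -[in RHS](mul1n d) -card_mx -[RHS]sum1_card.
rewrite (partition_big (B^~ x) predT) //= mulnC -sum_nat_const.
apply: eq_big => // t _.
by rewrite -(card_level_set t Bv0) -sum1_card; apply: eq_bigl => v; rewrite inE.
Qed.

Hypothesis d_gt0 : (0 < d)%N.

Lemma card_kernel x : #|[set v | B v x == 0%R]| =
  (#|F| ^ d.-1 + (x == 0%R) * (#|F| ^ d.-1 * #|F|.-1))%N.
Proof.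
have q_gt0 : (0 < #|F|)%N by apply: ltnW (card_finNzRing_gt1 F).
have qd : (#|F| ^ d = #|F| ^ d.-1 * #|F|)%N by rewrite -expnSr prednK.
have [->|xnz] := eqVneq x 0; last first.
  apply/eqP; rewrite mul0n addn0 -(eqn_pmul2r q_gt0) -qd.
  by rewrite card_kernel_mul.
rewrite (_ : [set v | _] = setT); last first.
  by apply/setP => v; rewrite !inE bilin0r // eqxx.
by rewrite cardsT card_mx mul1n qd mul1n -mulnS prednK.
Qed.

End Kernel.

Section Fibres.
Variables (F : finFieldType) (d : nat) (B : 'rV[F]_d -> 'rV[F]_d -> F).
Variable V : {set 'rV[F]_d}.
Hypothesis hB : is_bilinear_form B.

Lemma NlamV_scale a t v : a != 0 -> NlamV B (a * t) V (a *: v) = NlamV B t V v.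
Proof.
by move=> anz; apply/setP => u; rewrite !inE bilinZl // (inj_eq (mulfI anz)).
Qed.

Lemma sum_card_NlamV v : (\sum_t #|NlamV B t V v|)%N = #|V|.
Proof.
rewrite -sum1_card (partition_big (B v) predT) //=.
apply: eq_bigr => t _; rewrite -sum1_card.
by apply: eq_bigl => u; rewrite !inE andbC.
Qed.

Lemma card_NlamV_at v u :
  #|NlamV B (B v u) V v| = (\sum_(w in V) (B v u == B v w))%N.
Proof.
by rewrite sum_indicator; apply: eq_card => w; rewrite !inE andbC eq_sym.
Qed.

Lemma sum_sq_card_NlamV v : (\sum_t #|NlamV B t V v| ^ 2)%N =
  (\sum_(u in V) \sum_(w in V) (B v (u - w) == 0%R))%N.
Proof.
under [RHS]eq_bigr => u _ do
  under eq_bigr => w _ do rewrite bilinBr // subr_eq0.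
under [RHS]eq_bigr => u _ do rewrite -card_NlamV_at.
rewrite (partition_big (B v) predT) //=; apply: eq_bigr => t _.
rewrite (eq_bigr (fun=> #|NlamV B t V v|)) => [|u /andP[_ /eqP ->] //].
rewrite sum_nat_const mulnC; congr (_ * _)%N.
by apply: eq_card => u; rewrite !inE andbC.
Qed.

End Fibres.

Section SecondMoment.
Variables (F : finFieldType) (d : nat) (B : 'rV[F]_d -> 'rV[F]_d -> F).
Variable V : {set 'rV[F]_d}.
Hypotheses (hB : is_bilinear_form B) (hN : is_nondegenerate B).
Hypothesis d_gt0 : (0 < d)%N.

(* Summing over v, each pair (u,w) contributes the size of the kernel of
   B(., u - w). *)
Lemma second_moment : (\sum_v \sum_t #|NlamV B t V v| ^ 2)%N =
  (#|V| * (#|V| * #|F| ^ d.-1 + #|F| ^ d.-1 * #|F|.-1))%N.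
Proof.
under eq_bigr => v _ do rewrite sum_sq_card_NlamV //.
rewrite exchange_big /= -sum_nat_const; apply: eq_bigr => u uV.
rewrite exchange_big /=.
under eq_bigr => w _ do rewrite sum_indicator /= card_kernel //.
rewrite big_split /= sum_nat_const (bigD1 u) //= subrr eqxx mul1n.
rewrite big1 ?addn0 //.
by move=> w /andP[_ wu]; rewrite subr_eq0 eq_sym (negbTE wu).
Qed.

End SecondMoment.

Section Deviation.
Variables (F : finFieldType) (d : nat) (B : 'rV[F]_d -> 'rV[F]_d -> F).
Variable V : {set 'rV[F]_d}.
Hypothesis hB : is_bilinear_form B.

Definition sq_deviation (t : F) : rat :=
  \sum_(v : 'rV[F]_d) ((#|NlamV B t V v|)%:R - (#|V|)%:R / (#|F|)%:R) ^+ 2.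

Lemma sq_deviation_scale lam t :
  lam != 0 -> t != 0 -> sq_deviation t = sq_deviation lam.
Proof.
move=> lnz tnz; have anz : lam / t != 0 by rewrite mulf_neq0 ?invr_eq0.
rewrite /sq_deviation [RHS](reindex_inj (scalerI anz)); apply: eq_bigr => v _.
by rewrite -(@NlamV_scale _ _ B V hB _ t v anz) divfK.
Qed.

Lemma sum_sq_deviation_split lam : lam != 0 ->
  \sum_t sq_deviation t = sq_deviation 0 + sq_deviation lam *+ #|F|.-1.
Proof.
move=> lnz; rewrite (bigD1 0) //=; congr (_ + _).
rewrite (eq_bigr (fun=> sq_deviation lam)) => [|t tnz].
  by rewrite sumr_const -(cardC1 0); congr (_ *+ _); apply: eq_card.
exact: sq_deviation_scale.
Qed.

(* At level 0 the vector v = 0 alone contributes (|V| - |V|/q)^2 > 0. *)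
Lemma sq_deviation0_gt0 : V != set0 -> 0 < sq_deviation 0.
Proof.
move=> Vn0; rewrite /sq_deviation (bigD1 0) //=.
have -> : NlamV B 0 V 0 = V by apply/setP => u; rewrite !inE bilin0l // eqxx.
apply: ltr_wpDr; first by apply: sumr_ge0 => v _; apply: sqr_ge0.
have q_gt1 : (1 < #|F|)%N := card_finNzRing_gt1 F.
have V_gt0 : (0 : rat) < #|V|%:R by rewrite ltr0n card_gt0.
rewrite exprn_gt0 // subr_gt0 ltr_pdivrMr ?ltr0n 1?ltnW //.
by rewrite ltr_pMr // ltr1n.
Qed.

Hypotheses (hN : is_nondegenerate B) (d_gt0 : (0 < d)%N).

Lemma sum_sq_deviation :
  \sum_t sq_deviation t = (#|V| * (#|F| ^ d.-1 * #|F|.-1))%:R.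
Proof.
set c : rat := #|V|%:R / #|F|%:R.
have cq : c *+ #|F| = #|V|%:R.
  rewrite /c -[LHS]mulr_natr divfK // pnatr_eq0 -lt0n.
  exact: ltnW (card_finNzRing_gt1 F).
have row v : \sum_t ((#|NlamV B t V v|)%:R - c) ^+ 2 =
    \sum_t ((#|NlamV B t V v|) ^ 2)%:R - c ^+ 2 *+ #|F|.
  under [in RHS]eq_bigr do rewrite natrX.
  by apply: sum_sq_centered; rewrite -natr_sum sum_card_NlamV.
rewrite /sq_deviation exchange_big /= (eq_bigr _ (fun v _ => row v)).
rewrite sumrB sumr_const.
rewrite -(eq_bigr _ (fun v _ => natr_sum _ _ _ _)) -natr_sum second_moment //.
have qd : (#|F| ^ d = #|F| * #|F| ^ d.-1)%N by rewrite -expnS prednK.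
rewrite card_mx mul1n qd mulrnA expr2 -mulrnAr cq -mulrnAl cq -natrM -mulrnA.
by rewrite mulnDr natrD mulnA addrC addKr.
Qed.

End Deviation.

Theorem lemma2p1 (F : finFieldType) (d : nat) (B : 'rV[F]_d -> 'rV[F]_d -> F)
  (lam : F) (V : {set 'rV[F]_d}) :
  (1 <= d)%N ->
  is_bilinear_form B -> is_nondegenerate B ->
  lam != 0 ->
  V != set0 ->
  \sum_(v : 'rV[F]_d) ((#|NlamV B lam V v|)%:R - (#|V|)%:R / (#|F|)%:R) ^+ 2
    < ((#|F| ^ d.-1 * #|V|)%N)%:R :> rat.
Proof.
move=> d_gt0 hB hN lnz Vn0; rewrite -/(sq_deviation B V lam).
have q1_gt0 : (0 < #|F|.-1)%N by rewrite -subn1 subn_gt0 card_finNzRing_gt1.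
suff: sq_deviation B V lam *+ #|F|.-1 < ((#|F| ^ d.-1 * #|V|)%N)%:R *+ #|F|.-1.
  by rewrite ltrMn2r q1_gt0.
have -> : ((#|F| ^ d.-1 * #|V|)%N)%:R *+ #|F|.-1 =
    \sum_t sq_deviation B V t :> rat.
  by rewrite sum_sq_deviation // -mulrnA mulnCA mulnA.
by rewrite (sum_sq_deviation_split V hB lnz) ltrDr sq_deviation0_gt0.
Qed.
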